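(* Let $N$ be an NFA, let $L_0$ be a forward-admissible initial partition of its vertex set, let $L$ be the partition output by the forward refinement algorithm started from $L_0$, and let $\sim$ be the equivalence relation whose classes are the sets of $L$. Then $\sim$ refines $\sim_{\mathrm{fwd}}$, i.e. $v\sim w$ implies $v\sim_{\mathrm{fwd}}w$.
   Context: An NFA $N$ over a finite alphabet $A$ consists of a finite vertex set $V$, a starting vertex $v_s\in V$, accepting action sets for the vertices, and a set of labeled edges $v\xrightarrow{\lambda}w$ with $v,w\in V$ and $\lambda\in A\cup\{\varepsilon\}$. For a vertex $u$ and a finite sequence $\tau=\tau_1\cdots\tau_r$ ($r\ge0$) with $\tau_i\in A\cup\{\varepsilon\}$, a vertex $w$ is reachable from $u$ on $\tau$ if there are vertices $u=v_1,\dots,v_{r+1}=w$ with an edge $v_i\xrightarrow{\tau_i}v_{i+1}$ for each $i$. Vertices $v_1,v_2$ are forward-equivalent, $v_1\sim_{\mathrm{fwd}}v_2$, if for every finite sequence $\tau$ over $A\cup\{\varepsilon\}$, $v_1$ is reachable from $v_s$ on $\tau$ iff $v_2$ is. A partition $L_0$ of $V$ is a forward-admissible initial partition if $\{v_s\}\in L_0$. Refining a partition $P$ of $V$ by a subset $Y\subseteq V$ means replacing $P$ by the nonempty sets among $\{B\cap Y, B\setminus Y : B\in P\}$. Forward refinement algorithm: given $L_i$, for each $Z\in L_i$ and each $\sigma\in A\cup\{\varepsilon\}$ let $Z[\sigma]=\{z\in V: z'\xrightarrow{\sigma}z\text{ for some }z'\in Z\}$; $L_{i+1}$ is obtained from $L_i$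 by refining successively by all these sets $Z[\sigma]$. Repeat until $L_{i+1}=L_i$ and output this converged partition $L$. *)

From mathcomp Require Import all_boot.
Set Implicit Arguments. Unset Strict Implicit. Unset Printing Implicit Defensive.

(* An NFA over alphabet A with vertex set V: labels are [option A],
   [None] standing for epsilon; [e v l w] means there is an edge v -l-> w. *)
Section NFA.
Variables (A V : finType) (e : V -> option A -> V -> bool).

Fixpoint reachable (u : V) (tau : seq (option A)) (w : V) : bool :=
  match tau with
  | [::] => u == w
  | l :: tau' => [exists v, e u l v && reachable v tau' w]
  end.

Definition fwd_equiv (vs v1 v2 : V) : Prop :=
  forall tau : seq (option A), reachable vs tau v1 = reachable vs tau v2.

Definition refine_by (P : {set {set V}}) (Y : {set V}) : {set {set V}} :=
  ([set B :&: Y | B in P] :|: [set B :\: Y | B in P]) :\ set0.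

Definition succ_set (Z : {set V}) (l : option A) : {set V} :=
  [set z | [exists z', (z' \in Z) && e z' l z]].

Definition refine_step (L : {set {set V}}) : {set {set V}} :=
  foldl refine_by L [seq succ_set Z l | Z <- enum L, l <- enum {: option A}].

Definition fwd_output (L0 L : {set {set V}}) : Prop :=
  exists i, L = iter i refine_step L0 /\ refine_step L = L.

Definition same_block (L : {set {set V}}) (v w : V) : Prop :=
  exists2 B, B \in L & (v \in B) && (w \in B).
End NFA.

From mathcomp Require Import all_boot.

Set Implicit Arguments.
Unset Strict Implicit.
Unset Printing Implicit Defensive.

(* Refinement only ever splits blocks, so the output L is a partition of V
   finer than L0; in particular the block of the start vertex stays the
   singleton {vs}. At the fixed point every Z[sigma] (Z in L) is a union of
   blocks of L. Hence, by induction on tau read from its end, if a vertex is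
   reachable from vs on tau then so is every vertex of its block: the last
   edge z -sigma-> a of a run puts a in Z[sigma] for the block Z of z, so every
   b in the block of a has a sigma-predecessor z' in Z, itself reachable on the
   shorter prefix. *)

Section Refinement.
Variable V : finType.
Implicit Types (P : {set {set V}}) (B Y : {set V}).

Definition respects P Y :=
  forall B, B \in P -> forall a b, a \in B -> b \in B -> (a \in Y) = (b \in Y).

Lemma refine_by_sub P Y B' :
  B' \in refine_by P Y -> exists2 B, B \in P & B' \subset B.
Proof.
rewrite !inE => /andP[_ /orP[]] /imsetP[B PB ->];
  by exists B; rewrite ?subsetIl ?subsetDl.
Qed.

Lemma cover_refine_by P Y : cover (refine_by P Y) = cover P.
Proof.
apply/setP=> x; apply/bigcupP/bigcupP => [[B' /refine_by_sub[B PB sB'B] xB']|].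
  by exists B => //; apply: (subsetP sB'B).
case=> B PB xB; have [xY|xNY] := boolP (x \in Y).
- exists (B :&: Y); last by rewrite inE xB xY.
  rewrite !inE (imset_f (fun C => C :&: Y)) // andbT.
  by apply/set0Pn; exists x; rewrite inE xB xY.
- exists (B :\: Y); last by rewrite inE xB xNY.
  rewrite !inE (imset_f (fun C => C :\: Y)) // orbT andbT.
  by apply/set0Pn; exists x; rewrite inE xB xNY.
Qed.

Lemma respects_refine_by P Y Y' : respects P Y -> respects (refine_by P Y') Y.
Proof.
move=> PY B' /refine_by_sub[B PB sB'B] a b aB' bB'.
by apply: (PY B PB); apply: (subsetP sB'B).
Qed.

Lemma refine_by_respects P Y : respects (refine_by P Y) Y.
Proof.
move=> B'; rewrite !inE => /andP[_ /orP[]] /imsetP[B _ ->] a b; rewrite !inE.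
  by move=> /andP[_ ->] /andP[_ ->].
by move=> /andP[/negbTE -> _] /andP[/negbTE -> _].
Qed.

Lemma foldl_refine_by_respects P (ys : seq {set V}) Y :
  Y \in ys -> respects (foldl (@refine_by V) P ys) Y.
Proof.
elim: ys P => [|y ys IH] P //=; rewrite inE => /predU1P[->|]; last exact: IH.
elim: ys (refine_by P y) (@refine_by_respects P y) {IH} => //= y' ys IH Q QY.
exact/IH/respects_refine_by.
Qed.

Lemma foldl_refine_by_sub P (ys : seq {set V}) B' :
  B' \in foldl (@refine_by V) P ys -> exists2 B, B \in P & B' \subset B.
Proof.
elim: ys P => [|y ys IH] P /=; first by exists B'.
case/IH=> B /refine_by_sub[C PC sBC] sB'B.
by exists C => //; apply: subset_trans sBC.
Qed.

Lemma cover_foldl_refine_by P (ys : seq {set V}) :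
  cover (foldl (@refine_by V) P ys) = cover P.
Proof. by elim: ys P => //= y ys IH P; rewrite IH cover_refine_by. Qed.

End Refinement.

Section ForwardRefinement.
Variables (A V : finType) (e : V -> option A -> V -> bool).
Implicit Types (P L : {set {set V}}).

Lemma iter_refine_step_sub i P B' :
  B' \in iter i (refine_step e) P -> exists2 B, B \in P & B' \subset B.
Proof.
elim: i B' => [|i IH] B' /=; first by exists B'.
case/foldl_refine_by_sub=> B /IH[C PC sBC] sB'B.
by exists C => //; apply: subset_trans sBC.
Qed.

Lemma cover_iter_refine_step i P : cover (iter i (refine_step e) P) = cover P.
Proof. by elim: i => //= i IH; rewrite cover_foldl_refine_by. Qed.

Lemma refine_step_fixpoint_respects L Z (l : option A) :
  refine_step e L = L -> Z \in L -> respects L (succ_set e Z l).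
Proof.
move=> fixL LZ; rewrite -{1}fixL; apply: foldl_refine_by_respects.
by apply/allpairsP; exists (Z, l); rewrite !mem_enum.
Qed.

Lemma reachable_rcons u tau l w :
  reachable e u (rcons tau l) w = [exists z, reachable e u tau z && e z l w].
Proof.
elim: tau u => [|l0 tau IH] u /=.
  apply/existsP/existsP => [[v /andP[euv /eqP <-]]|[z /andP[/eqP <- euw]]].
    by exists u; rewrite eqxx.
  by exists w; rewrite euw eqxx.
apply/existsP/existsP => [[v /andP[euv]]|[z /andP[/existsP[v /andP[euv rvz]] ezw]]].
  rewrite IH => /existsP[z /andP[rvz ezw]].
  by exists z; rewrite ezw andbT; apply/existsP; exists v; rewrite euv.
by exists v; rewrite euv IH; apply/existsP; exists z; rewrite rvz.
Qed.

Section StableBlocks.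
Variables (vs : V) (L : {set {set V}}).
Hypothesis cover_L : cover L = [set: V].
Hypothesis block_vs : forall B, B \in L -> vs \in B -> B = [set vs].
Hypothesis respects_succ :
  forall Z (l : option A), Z \in L -> respects L (succ_set e Z l).

Lemma reachable_block tau B a b : B \in L -> a \in B -> b \in B ->
  reachable e vs tau a -> reachable e vs tau b.
Proof.
elim/last_ind: tau B a b => [|tau l IH] B a b LB aB bB /=.
  by move=> /eqP vs_a; move: bB; rewrite (block_vs LB) vs_a // inE eq_sym.
rewrite !reachable_rcons => /existsP[z /andP[rz ezla]].
have /bigcupP[Z LZ zZ] : z \in cover L by rewrite cover_L inE.
have a_succ : a \in succ_set e Z l.
  by rewrite inE; apply/existsP; exists z; rewrite zZ ezla.
move: a_succ; rewrite (respects_succ l LZ LB aB bB) inE.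
case/existsP=> z' /andP[z'Z ez'lb]; apply/existsP; exists z'.
by rewrite ez'lb andbT; apply: IH LZ zZ z'Z rz.
Qed.

End StableBlocks.
End ForwardRefinement.

Theorem mainTheorem7 (A V : finType) (e : V -> option A -> V -> bool)
  (vs : V) (L0 L : {set {set V}}) :
  partition L0 [set: V] ->
  [set vs] \in L0 ->
  fwd_output e L0 L ->
  forall v w : V, same_block L v w -> fwd_equiv e vs v w.
Proof.
case/and3P=> /eqP cover_L0 triv_L0 _ L0vs [i [-> fixL]].
set Li := iter i _ L0 in fixL *.
have cover_Li : cover Li = [set: V] by rewrite cover_iter_refine_step.
have block_vs B : B \in Li -> vs \in B -> B = [set vs].
  case/iter_refine_step_sub=> C L0C sBC vsB.
  have C_vs : C = [set vs].
    rewrite -(def_pblock triv_L0 L0C (subsetP sBC _ vsB)).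
    by rewrite (def_pblock triv_L0 L0vs) ?set11.
  by apply/eqP; rewrite eqEsubset -{1}C_vs sBC sub1set vsB.
have respects_succ Z (l : option A) : Z \in Li -> respects Li (succ_set e Z l).
  exact: refine_step_fixpoint_respects.
move=> v w [B LiB /andP[vB wB]] tau.
have reach_in_B := reachable_block cover_Li block_vs respects_succ LiB.
by apply/idP/idP; [exact: reach_in_B vB wB | exact: reach_in_B wB vB].
Qed.
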